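(* Let $E$ be a real Banach space, $K\subset E$ nonempty closed convex, $Y$ a real Banach space containing a closed, convex, pointed cone $C$ with nonempty interior, $T:K\to\mathcal P(K)$ a multivalued mapping, and $f:E\times E\to Y$ satisfying: (B1) $f(x,x)=0$ for all $x\in E$; (B2) $f$ is uniformly continuous on bounded subsets of $E\times E$; (B3) $f(x,\cdot)$ is $C$-convex for all $x\in E$. Then $DS(f,T)\subset S(f,T)$.
   Context: $y\preceq y'$ iff $y'-y\in C$. $G:E\to Y$ is $C$-convex if $G(tx+(1-t)y)\preceq tG(x)+(1-t)G(y)$ for all $x,y\in E$, $t\in[0,1]$. $S(f,T)=\{x\in K: x\in T(x),\ f(x,y)\notin-\mathrm{int}(C)\ \forall y\in T(x)\}$; $DS(f,T)=\{x\in K: x\in T(x),\ f(y,x)\in-C\ \forall y\in K\}$. *)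

From HB Require Import structures.
From mathcomp Require Import all_boot all_order all_algebra.
From mathcomp Require Import all_classical all_reals all_analysis.
Set Implicit Arguments. Unset Strict Implicit. Unset Printing Implicit Defensive.
Import Order.TTheory GRing.Theory Num.Theory.
Import numFieldNormedType.Exports.
Local Open Scope classical_set_scope.
Local Open Scope ring_scope.

Section Defs.
Context {R : realType}.

Definition is_cone {V : lmodType R} (C : set V) : Prop :=
  forall x (t : R), C x -> 0 <= t -> C (t *: x).

Definition pointed {V : lmodType R} (C : set V) : Prop :=
  C `&` [set y | C (- y)] = [set 0].

Definition cle {V : lmodType R} (C : set V) (y y' : V) : Prop := C (y' - y).

Definition C_convex {U V : lmodType R} (C : set V) (G : U -> V) : Prop :=
  forall x y (t : R), 0 <= t <= 1 ->
    cle C (G (t *: x + (1 - t) *: y)) (t *: G x + (1 - t) *: G y).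

Definition bounded_pairs {E : normedModType R} (B : set (E * E)) : Prop :=
  exists M : R, forall p, B p -> `|p.1| <= M /\ `|p.2| <= M.

Definition unif_cont_on_bounded {E Y : normedModType R} (f : E -> E -> Y) : Prop :=
  forall B : set (E * E), bounded_pairs B ->
  forall eps : R, 0 < eps -> exists2 delta : R, 0 < delta &
    forall p q, B p -> B q -> `|p.1 - q.1| < delta -> `|p.2 - q.2| < delta ->
      `|f p.1 p.2 - f q.1 q.2| < eps.

Definition Ssol {E Y : normedModType R} (C : set Y) (K : set E)
  (f : E -> E -> Y) (T : E -> set E) : set E :=
  [set x | K x /\ T x x /\ forall y, T x y -> ~ (interior C) (- f x y)].

Definition DSsol {E Y : normedModType R} (C : set Y) (K : set E)
  (f : E -> E -> Y) (T : E -> set E) : set E :=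
  [set x | K x /\ T x x /\ forall y, K y -> C (- f y x)].

End Defs.

From HB Require Import structures.
From mathcomp Require Import all_boot all_order all_algebra.
From mathcomp Require Import all_classical all_reals all_analysis.
From mathcomp Require Import ring lra.
Import Order.TTheory GRing.Theory Num.Theory.
Import numFieldNormedType.Exports.
Local Open Scope classical_set_scope.
Local Open Scope ring_scope.

(* Let x be a solution of the dual problem and y in T(x). Along the segment
   z_t = t y + (1 - t) x, which stays in K, the C-convexity of f(z_t, .)
   together with f(z_t, z_t) = 0 and -f(z_t, x) in C forces f(z_t, y) in C.
   Letting t -> 0+ and using the continuity of f and the closedness of C gives
   f(x, y) in C. If also -f(x, y) were in int C, pointedness would make
   f(x, y) = 0, so 0 would be an interior point of the cone C, i.e. C = Y. *)

Section ConvexCone.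
Context {R : realType} {V : lmodType R}.

Lemma convex_set_comb {K : set V} {x y} {t : R} :
  convex_set K -> K x -> K y -> 0 <= t <= 1 -> K (t *: x + (1 - t) *: y).
Proof.
move=> cK Kx Ky /andP[t0 t1].
by have /set_mem := cK x y (Itv01 t0 t1) (mem_set Kx) (mem_set Ky).
Qed.

Context {C : set V}.
Hypotheses (coneC : is_cone C) (convC : convex_set C).

Lemma cone_addr_closed {a b} : C a -> C b -> C (a + b).
Proof.
move=> Ca Cb; have half01 : 0 <= (2^-1 : R) <= 1.
  by rewrite invr_ge0 ler0n invf_le1 ?ler1n.
have := coneC _ 2 (convex_set_comb convC Ca Cb half01) (ler0n _ 2).
rewrite scalerDr !scalerA (_ : 1 - 2^-1 = 2^-1 :> R); last by field.
by rewrite mulfV // !scale1r.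
Qed.

Lemma C_convex_zero_segment {U : lmodType R} {G : U -> V} {x y} {t : R} :
  C_convex C G -> 0 < t <= 1 -> G (t *: y + (1 - t) *: x) = 0 ->
  C (- G x) -> C (G y).
Proof.
move=> Gconv /andP[t0 t1] Gz0 CNGx.
have /= := Gconv y x t; rewrite /cle Gz0 subr0 (ltW t0) t1 => /(_ isT) CGyx.
have CNGx' : C ((1 - t) *: - G x) by apply: coneC; rewrite // subr_ge0.
have := cone_addr_closed CGyx CNGx'; rewrite scalerN addrK => CtGy.
have := coneC _ t^-1 CtGy; rewrite scalerA mulVf ?gt_eqF // scale1r.
by apply; rewrite invr_ge0 ltW.
Qed.

End ConvexCone.

Section NormedCone.
Context {R : realType} {Y : normedModType R} {C : set Y}.
Hypothesis coneC : is_cone C.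

Lemma cone_interior0_setT : interior C 0 -> C = setT.
Proof.
move=> /nbhs_ballP[e /= e0 sC]; apply/seteqP; split => // v _.
have [->|v0] := eqVneq v 0; first exact/sC/ballxx.
have nv : 0 < `|v| by rewrite normr_gt0.
pose s := e / (2 * `|v|).
have s0 : 0 < s by rewrite divr_gt0 ?mulr_gt0.
have Csv : C (s *: v).
  apply: sC; rewrite -ball_normE /= sub0r normrN normrZ gtr0_norm //.
  have -> : s * `|v| = e / 2 by rewrite /s; field; rewrite gt_eqF.
  lra.
have := coneC _ s^-1 Csv; rewrite scalerA mulVf ?gt_eqF // scale1r.
by apply; rewrite invr_ge0 ltW.
Qed.

Hypotheses (pointedC : pointed C) (CNT : C <> setT).

Lemma pointed_cone_interiorN y : C y -> ~ interior C (- y).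
Proof.
move=> Cy intCNy; have CNy : C (- y) by exact: interior_subset.
have : (C `&` [set y | C (- y)]) y by [].
rewrite pointedC => /= y0; rewrite y0 oppr0 in intCNy.
exact/CNT/cone_interior0_setT.
Qed.

End NormedCone.

Lemma segment_cvg_at_right (R : realType) (E : normedModType R) (x y : E) :
  t *: y + (1 - t) *: x @[t --> 0^'+] --> x.
Proof.
apply: cvg_within_filter.
have : t *: y + (1 - t) *: x @[t --> (0 : R)] --> 0 *: y + (1 - 0) *: x.
  apply: cvgD; apply: cvgZ; try exact: cvg_cst; first exact: cvg_id.
  by apply: cvgB; [exact: cvg_cst|exact: cvg_id].
by rewrite scale0r add0r subr0 scale1r.
Qed.

Lemma unif_cont_on_bounded_continuous_fst (R : realType) (E Y : normedModType R)
    (f : E -> E -> Y) y :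
  unif_cont_on_bounded f -> continuous (f ^~ y).
Proof.
move=> fuc x; apply/cvgrPdist_lt => e e0.
pose B := [set p : E * E | `|p.1| <= `|x| + 1 /\ `|p.2| <= `|y|].
have Bbounded : bounded_pairs B.
  exists (`|x| + 1 + `|y|) => p [p1 p2].
  by have := normr_ge0 x; have := normr_ge0 y; split; lra.
have [d d0 fd] := fuc B Bbounded e e0.
have dmin0 : 0 < Num.min d 1 by rewrite lt_min d0 ltr01.
near=> z; have /andP[xzd xz1] : (`|x - z| < d) && (`|x - z| < 1).
  by rewrite -lt_min; near: z; exact: (cvgrPdist_lt _ _).1 cvg_id _ dmin0.
apply: (fd (x, y) (z, y)) => //=; rewrite ?subrr ?normr0 //; split => //.
- lra.
- by rewrite -(subKr x z) (le_trans (ler_normD _ _)) // normrN lerD // ltW.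
Unshelve. all: by end_near.
Qed.

Theorem corollary2p16 (R : realType) (E Y : completeNormedModType R)
  (K : set E) (C : set Y) (T : E -> set E) (f : E -> E -> Y) :
  K !=set0 -> closed K -> convex_set K ->
  closed C -> convex_set C -> is_cone C -> pointed C -> C <> setT ->
  interior C !=set0 ->
  (forall x, K x -> T x `<=` K) ->
  (forall x, f x x = 0) ->
  unif_cont_on_bounded f ->
  (forall x, C_convex C (f x)) ->
  DSsol C K f T `<=` Ssol C K f T.
Proof.
move=> _ _ convK closedC convC coneC pointedC CNT _ TK f0 fuc fconv.
move=> x [Kx [Txx DSx]]; split => //; split => // y Txy.
have Ky := TK x Kx y Txy.
have fzy_cvg : f (t *: y + (1 - t) *: x) y @[t --> 0^'+] --> f x y.
  apply: (continuous_cvg _ _ (h := f ^~ y)); last exact: segment_cvg_at_right.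
  exact: unif_cont_on_bounded_continuous_fst.
have Cfxy : C (f x y).
  apply: (closed_cvg _ closedC _ _ fzy_cvg).
  near=> t.
  have t0 : 0 < t by near: t; exact: nbhs_right_gt.
  have t1 : t <= 1 by near: t; exact: nbhs_right_le.
  have Kz : K (t *: y + (1 - t) *: x) by apply: convex_set_comb; rewrite ?ltW.
  have t01 : 0 < t <= 1 by rewrite t0.
  exact: (C_convex_zero_segment coneC convC (fconv _) t01 (f0 _) (DSx _ Kz)).
exact: pointed_cone_interiorN.
Unshelve. all: end_near.
Qed.
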